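(* Let $R$ be a commutative ring and $d\in\mathbb{N}$. Then $H_a(\widetilde{S}_{-*}M(d))=0$ for every $a\ge1$; equivalently, for every $n\in\mathbb{N}$ and every $a\ge1$, the homology of the complex of $R$-modules $(\widetilde{S}_{-*}M(d))([n])$ at the term $(\widetilde{S}_{-a}M(d))([n])$ vanishes.
   Context: Let $R$ be a commutative ring. $\mathrm{FI}$ denotes the category of finite sets and injective maps; an $\mathrm{FI}$-module is a covariant functor from $\mathrm{FI}$ to $R$-modules. For $n\in\mathbb{N}$, $[n]=\{1,\dots,n\}$. For $d\in\mathbb{N}$, $M(d)$ is the $\mathrm{FI}$-module with $M(d)(X)=R\,\mathrm{Hom}_{\mathrm{FI}}([d],X)$ (free $R$-module on injections $[d]\to X$), with injections $X\to X'$ acting by post-composition. The complex $\widetilde{S}_{-*}V$: for a finite set $I$, $\det(I)=\bigwedge^{|I|}RI$ where $RI$ is free on $I$ ($\det(\emptyset)=R$). For an $\mathrm{FI}$-module $V$, finite set $X$, $T\subset X$, $i\in X\setminus T$, $v\in V(T)$, write $i(v)$ for the image of $v$ under the inclusion $T\to T\cup\{i\}$. Set $(\widetilde{S}_{-a}V)(X)=\bigoplus_{I\subset X,|I|=a}V(X\setminus I)\otimes_R\det(I)$, with differential $d(v\otimes i_1\wedge\cdots\wedge i_a)=\sum_{p=1}^a(-1)^p i_p(v)\otimes i_1\wedge\cdots\widehat{i_p}\cdots\wedge i_a$ for $v\in V(X\setminus I)$, $I=\{i_1,\dots,i_a\}$; an injection $\alpha:X\to X'$ acts by $v\otimes i_1\wedge\cdots\wedge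 i_a\mapsto\alpha(v)\otimes\alpha(i_1)\wedge\cdots\wedge\alpha(i_a)$. Thus $\cdots\to\widetilde{S}_{-1}V\to\widetilde{S}_0V\to0$ is a complex of $\mathrm{FI}$-modules, and $H_a(\widetilde{S}_{-*}V)$ denotes its homology at $\widetilde{S}_{-a}V$. *)

From HB Require Import structures.
From mathcomp Require Import all_boot all_order all_algebra.
Set Implicit Arguments. Unset Strict Implicit. Unset Printing Implicit Defensive.
Import Order.TTheory GRing.Theory Num.Theory.

(* Concrete model of the complex (S~_{-*} M(d))([n]) of R-modules.
   [n] is modelled by 'I_n (order-preserving relabelling 1..n -> 0..n-1).
   (S~_{-a} M(d))([n]) = (+)_{I subset [n], |I| = a} M(d)([n] \ I) (x) det(I)
   is a free R-module with basis the pairs (I, f) with |I| = a and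
   f : [d] -> [n] \ I injective; the basis vector is
   f (x) i_1 /\ ... /\ i_a  with  i_1 < ... < i_a  the elements of I.
   An element is represented by its coefficient function on pairs
   (I, f) in {set 'I_n} * {ffun 'I_d -> 'I_n}, vanishing off the basis. *)

Definition FIbasis (n d : nat) := ({set 'I_n} * {ffun 'I_d -> 'I_n})%type.

Definition valid_pair (n d a : nat) (p : FIbasis n d) : bool :=
  [&& #|p.1| == a, injectiveb p.2 & [disjoint codom p.2 & p.1]].

Definition is_chain (R : comPzRingType) (n d a : nat)
    (c : {ffun FIbasis n d -> R}) : Prop :=
  forall p, ~~ valid_pair a p -> c p = 0%R.

(* The differential, written on coefficients:
   d(f (x) i_1/\.../\i_a) = sum_p (-1)^p f (x) i_1/\..^i_p../\i_a, so the
   coefficient of f (x) J in d c is  sum_{i notin J} (-1)^{pos(i, J+i)} c(J+i, f)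
   where pos(i, J+i) = 1 + #{j in J | j < i} is the (1-based) position of i. *)
Definition bd (R : comPzRingType) (n d : nat)
    (c : {ffun FIbasis n d -> R}) : {ffun FIbasis n d -> R} :=
  [ffun p : FIbasis n d =>
     (\sum_(i : 'I_n | i \notin p.1)
        (-1) ^+ (#|[set j in p.1 | (j < i)%N]|.+1) * c (i |: p.1, p.2))%R].

From HB Require Import structures.
From mathcomp Require Import all_boot all_order all_algebra.
Import Order.TTheory GRing.Theory Num.Theory.
Set Implicit Arguments. Unset Strict Implicit.
Local Open Scope ring_scope.

(* A point v of [n] missed by f gives a contracting homotopy on the summand
   of injection f: the cone map  f (x) J |-> f (x) v /\ J  satisfies
   bd \o cone + cone \o bd = id  there, by the Koszul sign rule.  Taking v
   to be the first point missed by f, which depends on f only, the cone maps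
   assemble into one operator.  Only a surjective f misses no point, but then
   J must be empty, which is excluded in degree a >= 1. *)

Section Cone.
Variables (R : comPzRingType) (n d : nat).
Local Notation chain := {ffun FIbasis n d -> R}.

Definition ins_sign (i : 'I_n) (J : {set 'I_n}) : R :=
  (-1) ^+ (#|[set j in J | (j < i)%N]|.+1).

Lemma ins_sign_sqr i J : ins_sign i J * ins_sign i J = 1.
Proof. by rewrite -expr2 sqrr_sign. Qed.

Lemma bdE (c : chain) p :
  bd c p = \sum_(i | i \notin p.1) ins_sign i p.1 * c (i |: p.1, p.2).
Proof. by rewrite ffunE. Qed.

Lemma card_sepU1 (x : 'I_n) (A : {set 'I_n}) (P : pred 'I_n) : x \notin A ->
  #|[set j in x |: A | P j]| = (P x + #|[set j in A | P j]|)%N.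
Proof.
move=> xA; case Px: (P x).
  have -> : [set j in x |: A | P j] = x |: [set j in A | P j].
    by apply/setP=> y; rewrite !inE; case: eqP => [->|]; rewrite ?Px.
  by rewrite cardsU1 !inE (negbTE xA).
have -> // : [set j in x |: A | P j] = [set j in A | P j].
by apply/setP=> y; rewrite !inE; case: eqP => [->|]; rewrite ?Px ?(negbTE xA).
Qed.

Lemma ins_signC (i v : 'I_n) (J : {set 'I_n}) :
  i \notin J -> v \notin J -> i != v ->
  ins_sign i (v |: J) * ins_sign v (i |: J) = - (ins_sign i J * ins_sign v J).
Proof.
move=> iJ vJ iv; rewrite /ins_sign (card_sepU1 _ vJ) (card_sepU1 _ iJ) /=.
rewrite -!exprD -(mulN1r ((-1) ^+ _)) -exprS.
rewrite -[LHS]signr_odd -[RHS]signr_odd; congr (_ ^+ _).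
have /negbTE v_neq_i : (v : nat) != i by rewrite (inj_eq val_inj) eq_sym.
by case: (ltngtP v i) v_neq_i => // _ _; rewrite ?add0n ?add1n !addSn !addnS.
Qed.

Definition free_pt (f : {ffun 'I_d -> 'I_n}) : option 'I_n :=
  [pick x | x \notin codom f].

Definition cone (c : chain) : chain :=
  @finfun (FIbasis n d) (fun=> R) (fun p =>
     if free_pt p.2 is Some v then
       if v \in p.1 then ins_sign v (p.1 :\ v) * c (p.1 :\ v, p.2) else 0
     else 0).

Lemma cone0 : cone 0 = 0.
Proof.
apply/ffunP => p; rewrite !ffunE; case: (free_pt p.2) => // v.
by case: ifP => // _; rewrite ffunE mulr0.
Qed.

Lemma cone_chain a (c : chain) : is_chain a c -> is_chain a.+1 (cone c).
Proof.
move=> c_a [K f] /= notK; rewrite ffunE /free_pt /=.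
case: pickP => [v /= vf|] //; case vK: (v \in K) => //.
rewrite c_a ?mulr0 //; apply: contra notK; rewrite /valid_pair /=.
case/and3P => /eqP cardK -> disj; apply/and3P; split => //.
  by rewrite (cardsD1 v) vK cardK.
apply/pred0P => x /=; move/pred0P: disj => /(_ x) /=; rewrite !inE.
by case: eqP => [->|] //=; rewrite (negbTE vf).
Qed.

Lemma cone_homotopy_notin (c : chain)
    (J : {set 'I_n}) (f : {ffun 'I_d -> 'I_n}) (v : 'I_n) :
  free_pt f = Some v -> v \notin J ->
  bd (cone c) (J, f) + cone (bd c) (J, f) = c (J, f).
Proof.
move=> fv vJ; rewrite [cone _ _]ffunE fv /= (negbTE vJ) addr0.
rewrite bdE (bigD1 v) //= big1 ?addr0 => [|i /andP[iJ iv]].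
  by rewrite ffunE fv /= setU11 setU1K // mulrA ins_sign_sqr mul1r.
by rewrite ffunE fv /= !inE (eq_sym v) (negbTE iv) (negbTE vJ) mulr0.
Qed.

Lemma cone_homotopy_in (c : chain)
    (J : {set 'I_n}) (f : {ffun 'I_d -> 'I_n}) (v : 'I_n) :
  free_pt f = Some v -> v \in J ->
  bd (cone c) (J, f) + cone (bd c) (J, f) = c (J, f).
Proof.
move=> fv vJ; set J' := J :\ v; have vJ' : v \notin J' by rewrite setD11.
have ->: cone (bd c) (J, f) = ins_sign v J' * bd c (J', f).
  by rewrite ffunE fv /= vJ.
rewrite [bd c _]bdE /= (bigD1 v) //= /J' setD1K // -/J'.
rewrite mulrDr mulrA ins_sign_sqr mul1r addrCA -[RHS]addr0; congr (_ + _).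
have notJ'E i : (i \notin J') && (i != v) = (i \notin J).
  by rewrite !inE negb_and negbK; case: eqVneq => [->|]; rewrite ?vJ ?andbT.
rewrite bdE (eq_bigl _ _ notJ'E) big_distrr -big_split big1 //= => i iJ.
have iv : i != v by apply: contraNneq iJ => ->.
have iJ' : i \notin J' by rewrite !inE negb_and iJ orbT.
rewrite ffunE fv /= setU1r //.
have ->: (i |: J) :\ v = i |: J'.
  by apply/setP => x; rewrite !inE; case: (eqVneq x i) => [->|] //=; rewrite iv.
rewrite -{1}(setD1K vJ) -/J' !mulrA ins_signC //.
by rewrite -mulrDl (mulrC (ins_sign v J')) addNr mul0r.
Qed.

Lemma cone_homotopy (c : chain)
    (J : {set 'I_n}) (f : {ffun 'I_d -> 'I_n}) (v : 'I_n) :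
  free_pt f = Some v -> bd (cone c) (J, f) + cone (bd c) (J, f) = c (J, f).
Proof.
move=> fv; have [vJ|vJ] := boolP (v \in J).
  exact: (cone_homotopy_in c fv vJ).
exact: (cone_homotopy_notin c fv vJ).
Qed.

Lemma chain_onto_eq0 a (c : chain) (J : {set 'I_n}) (f : {ffun 'I_d -> 'I_n}) :
  (1 <= a)%N -> is_chain a c -> free_pt f = None -> c (J, f) = 0.
Proof.
move=> a_gt0 c_a; rewrite /free_pt; case: pickP => // f_onto _.
apply: c_a; rewrite /valid_pair /=.
have [->|[x xJ]] := set_0Vmem J.
  by rewrite cards0 eq_sym (negbTE (lt0n_neq0 a_gt0)).
apply/negP => /and3P[_ _ /pred0P /(_ x)] /=.
by move: (f_onto x) => /= /negbFE ->; rewrite xJ.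
Qed.

End Cone.

Theorem proposition3p2 (R : comPzRingType) (d n a : nat) : (1 <= a)%N ->
  forall c : {ffun FIbasis n d -> R},
    is_chain a c -> bd c = 0%R ->
    exists b : {ffun FIbasis n d -> R}, is_chain a.+1 b /\ bd b = c.
Proof.
move=> a_gt0 c c_a c_cycle; exists (cone c); split; first exact: cone_chain.
apply/ffunP => -[J f]; case fv: (free_pt f) => [v|].
  by rewrite -[RHS](cone_homotopy c J fv) c_cycle cone0 [X in _ + X]ffunE addr0.
rewrite (chain_onto_eq0 _ a_gt0 c_a fv) bdE big1 // => i _.
by rewrite ffunE /= fv mulr0.
Qed.
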